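(* Let $q$ be a prime power and $1\le s<t<k$ integers. If there exists a linear AOA$(s,t,k,q)$, then there exists a linear AOA$(k-t,k-s,k,q)$.
   Context: An orthogonal array OA$(t,k,v)$ (with $1\le t\le k$) is a $v^t\times k$ array with entries from a set $X$ of size $v$ such that, for every choice of $t$ of its columns, each $t$-tuple in $X^t$ appears exactly once as a row of the corresponding $v^t\times t$ subarray. For integers $1\le s\le t\le k$, an augmented orthogonal array AOA$(s,t,k,v)$ is a $v^t\times(k+1)$ array $A$ such that: (1) the first $k$ columns of $A$ form an OA$(t,k,v)$ on a symbol set $X$ of size $v$; (2) the last column of $A$ has entries from a set $Y$ of size $v^{t-s}$; (3) for any choice of $s$ of the first $k$ columns, these $s$ columns together with the last column contain every $(s+1)$-tuple of $X^s\times Y$ exactly once as a row. For a prime power $q$, an AOA$(s,t,k,q)$ is linear if $X=\mathbb{F}_q$, $Y=\mathbb{F}_q^{t-s}$, and its set of rows, regarded as vectors in $\mathbb{F}_q^{k}\times\mathbb{F}_q^{t-s}=\mathbb{F}_q^{k+t-s}$, is an $\mathbb{F}_q$-linear subspace. *)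

From HB Require Import structures.
From mathcomp Require Import all_boot all_order all_algebra.
Set Implicit Arguments. Unset Strict Implicit. Unset Printing Implicit Defensive.
Import GRing.Theory.

Definition is_OA (X : finType) (t k : nat) (A : seq {ffun 'I_k -> X}) : Prop :=
  [/\ (1 <= t)%N, (t <= k)%N, size A = (#|X| ^ t)%N &
      forall c : 'I_t -> 'I_k, injective c ->
      forall x : {ffun 'I_t -> X},
        count (fun r : {ffun 'I_k -> X} => [forall i, r (c i) == x i]) A = 1%N].

(* Augmented orthogonal array AOA(s,t,k,v) with v = #|X|: rows are pairs
   (first k entries, last-column entry in Y). *)
Definition is_AOA (X Y : finType) (s t k : nat)
    (A : seq ({ffun 'I_k -> X} * Y)) : Prop :=
  [/\ (1 <= s)%N, (s <= t)%N,
      @is_OA X t k (map fst A),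
      #|Y| = (#|X| ^ (t - s))%N &
      forall c : 'I_s -> 'I_k, injective c ->
      forall (x : {ffun 'I_s -> X}) (y : Y),
        count (fun r : {ffun 'I_k -> X} * Y =>
                 [forall i, r.1 (c i) == x i] && (r.2 == y)) A = 1%N].

(* Linear AOA over the finite field F (q = #|F|): X = F, Y = F^(t-s), and
   the set of rows, viewed in F^k x F^(t-s) = F^(k+t-s), is an F-subspace. *)
Definition is_linear_AOA (F : finFieldType) (s t k : nat)
    (A : seq ({ffun 'I_k -> F} * {ffun 'I_(t - s) -> F})) : Prop :=
  [/\ @is_AOA F _ s t k A,
      (([ffun => 0%R], [ffun => 0%R]) : {ffun 'I_k -> F} * {ffun 'I_(t - s) -> F}) \in A &
      forall (a : F) (u v : {ffun 'I_k -> F} * {ffun 'I_(t - s) -> F}),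
        u \in A -> v \in A ->
        ([ffun i => (a * u.1 i + v.1 i)%R], [ffun j => (a * u.2 j + v.2 j)%R]) \in A].

(* Read a linear AOA(s,t,k,q) as the code C in F^(k + (t-s)) formed by its
   rows.  Its two counting conditions say that every set of t of the first k
   coordinates, and every set of s of them together with the last t-s
   coordinates, is an information set of C: restriction to it is a bijection
   on C.  For a subspace, the complement of an information set is an
   information set of the dual code.  Complementing within the first k
   coordinates exchanges the two families, now of sizes k-t (with the last
   block) and k-s (without it), so the dual code is a linear
   AOA(k-t,k-s,k,q). *)

From HB Require Import structures.
From mathcomp Require Import all_boot all_order all_algebra.
From mathcomp Require Import zify.
Set Implicit Arguments. Unset Strict Implicit. Unset Printing Implicit Defensive.
Import GRing.Theory.
Local Open Scope ring_scope.

Section DualCode.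
Variables (F : finFieldType) (D : finType).
Local Notation V := {ffun D -> F}.

Definition lincomb (a : F) (u v : V) : V := [ffun d => a * u d + v d].

Definition subspace (C : pred V) : Prop :=
  C 0 /\ forall a u v, C u -> C v -> C (lincomb a u v).

Definition dotv (w c : V) : F := \sum_d w d * c d.

Definition dual_code (C : pred V) : pred V :=
  [pred w | [forall c, C c ==> (dotv w c == 0)]].

Definition info_set (C : pred V) (I : pred D) : Prop :=
  (forall z, exists2 c, C c & {in I, c =1 z}) /\
  (forall c1 c2, C c1 -> C c2 -> {in I, c1 =1 c2} -> c1 = c2).

Lemma eq_info_set C (I J : pred D) : I =1 J -> info_set C I -> info_set C J.
Proof.
move=> eqIJ [exC uniqC]; split=> [z | c1 c2 Cc1 Cc2 eq12].
  by have [c Cc eqcz] := exC z; exists c => // d; rewrite -[d \in J]eqIJ; apply: eqcz.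
by apply: uniqC => // d; rewrite [d \in I]eqIJ; apply: eq12.
Qed.

Lemma dotv_lincomb a u v c : dotv (lincomb a u v) c = a * dotv u c + dotv v c.
Proof.
rewrite /dotv mulr_sumr -big_split /=; apply: eq_bigr => d _.
by rewrite ffunE mulrDl mulrA.
Qed.

Lemma dual_subspace C : subspace (dual_code C).
Proof.
split.
  apply/forallP=> c; apply/implyP=> _; rewrite /dotv big1 // => d _.
  by rewrite ffunE mul0r.
move=> a u v /forallP Cu /forallP Cv; apply/forallP=> c; apply/implyP=> Cc.
by rewrite dotv_lincomb (eqP (implyP (Cu c) Cc)) (eqP (implyP (Cv c) Cc)) mulr0 addr0.
Qed.

Section Subspace.
Variables (C : pred V).
Hypothesis subC : subspace C.

Lemma subspace_sum (P : pred D) (f : D -> V) :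
  (forall i, C (f i)) -> C (\sum_(i | P i) f i).
Proof.
have [C0 Clin] := subC; move=> Cf; apply: (big_ind C) => // u v Cu Cv.
by have := Clin 1 u v Cu Cv; congr C; apply/ffunP=> d; rewrite !ffunE mul1r.
Qed.

Lemma subspace_scale a u : C u -> C [ffun d => a * u d].
Proof.
have [C0 Clin] := subC; move=> Cu.
by have := Clin a u 0 Cu C0; congr C; apply/ffunP=> d; rewrite !ffunE addr0.
Qed.

End Subspace.

Section Basis.
Variables (C : pred V) (I : pred D).
Hypotheses (subC : subspace C) (infoC : info_set C I).
Variable e : D -> V.
Hypotheses (Ce : forall i, C (e i)) (e_delta : forall i, {in I, e i =1 fun d => (d == i)%:R}).

Lemma info_set_expand c : C c -> forall d, c d = \sum_(i | I i) c i * e i d.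
Proof.
move=> Cc; suff {1}-> : c = \sum_(i | I i) [ffun d => c i * e i d].
  by move=> d; rewrite sum_ffunE; apply: eq_bigr => i _; rewrite ffunE.
apply: infoC.2 => //; first by apply: subspace_sum => // i; apply: subspace_scale.
move=> d Id; rewrite sum_ffunE (bigD1 d) //= ffunE e_delta // eqxx mulr1.
rewrite big1 ?addr0 // => i /andP [_ ndi].
by rewrite ffunE e_delta // eq_sym (negbTE ndi) mulr0.
Qed.

(* Orthogonality to the e i forces the values of w on I. *)
Lemma dual_code_extend z : exists2 w, dual_code C w & {in predC I, w =1 z}.
Proof.
exists [ffun d => if I d then - \sum_(j | ~~ I j) z j * e d j else z d]; last first.
  by move=> d /negbTE nId; rewrite ffunE nId.
apply/forallP=> c; apply/implyP=> Cc; rewrite /dotv (bigID I) /=.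
have -> : \sum_(d | ~~ I d) [ffun d => if I d then - \sum_(j | ~~ I j) z j * e d j
      else z d] d * c d = \sum_(i | I i) c i * \sum_(j | ~~ I j) z j * e i j.
  under eq_bigr => d /negbTE nId do rewrite ffunE nId (info_set_expand Cc) mulr_sumr.
  rewrite exchange_big /=; apply: eq_bigr => i _; rewrite mulr_sumr.
  by apply: eq_bigr => j _; rewrite mulrCA.
rewrite -big_split big1 //= => i Ii.
by rewrite ffunE Ii mulNr mulrC addNr.
Qed.

Lemma dual_code_eq0 w : dual_code C w -> {in predC I, forall d, w d = 0} -> w = 0.
Proof.
move=> /forallP dualw w0; apply/ffunP=> i; rewrite ffunE.
case Ii: (I i); last by apply: w0; rewrite inE /= Ii.
have /eqP <- := implyP (dualw (e i)) (Ce i).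
rewrite /dotv (bigID I) /= [X in _ + X]big1 => [|d nId]; last first.
  by rewrite w0 ?ffunE ?mul0r.
rewrite addr0 (bigD1 i) //= e_delta // eqxx mulr1 big1 ?addr0 // => d /andP [Id ndi].
by rewrite e_delta // (negbTE ndi) mulr0.
Qed.

End Basis.

Lemma dual_info_set C I : subspace C -> info_set C I -> info_set (dual_code C) (predC I).
Proof.
move=> subC infoC.
have /fin_all_exists [e He] :
    forall i, exists c, C c /\ {in I, c =1 fun d => (d == i)%:R}.
  move=> i; have [c Cc eqc] := infoC.1 [ffun d => (d == i)%:R].
  by exists c; split=> // d Id; rewrite eqc // ffunE.
have Ce i := (He i).1; have e_delta i := (He i).2.
split=> [z | w1 w2 Dw1 Dw2 eq12]; first exact: dual_code_extend.
apply/subr0_eq/(dual_code_eq0 Ce e_delta).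
  have := (dual_subspace C).2 (-1) w2 w1 Dw2 Dw1; congr (dual_code C _).
  by apply/ffunP=> d; rewrite !ffunE mulN1r addrC.
by move=> d Id; rewrite !ffunE eq12 // subrr.
Qed.

End DualCode.

Lemma count1_eq (T : eqType) (P : pred T) (s : seq T) x y :
  count P s = 1%N -> x \in s -> y \in s -> P x -> P y -> x = y.
Proof.
rewrite -size_filter => h xs ys Px Py.
have : x \in filter P s by rewrite mem_filter Px.
have : y \in filter P s by rewrite mem_filter Py.
by move: h; case: (filter P s) => [|r [|]] //= _; rewrite !inE => /eqP -> /eqP ->.
Qed.

Section RowCode.
Variables (F : finFieldType) (k m : nat).
Local Notation Row := ({ffun 'I_k -> F} * {ffun 'I_m -> F})%type.
Local Notation V := {ffun 'I_k + 'I_m -> F}.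

Definition vec_of_row (p : Row) : V :=
  [ffun d => match d with inl i => p.1 i | inr j => p.2 j end].

Definition row_of_vec (v : V) : Row := ([ffun i => v (inl i)], [ffun j => v (inr j)]).

Lemma vec_of_rowK : cancel vec_of_row row_of_vec.
Proof. by case=> x y; congr (_, _); apply/ffunP=> i; rewrite !ffunE. Qed.

Lemma row_of_vecK : cancel row_of_vec vec_of_row.
Proof. by move=> v; apply/ffunP; case=> i; rewrite !ffunE. Qed.

Definition row_comb (a : F) (u v : Row) : Row :=
  ([ffun i => a * u.1 i + v.1 i], [ffun j => a * u.2 j + v.2 j]).

Lemma vec_of_row_comb a u v :
  vec_of_row (row_comb a u v) = lincomb a (vec_of_row u) (vec_of_row v).
Proof. by apply/ffunP; case=> i; rewrite !ffunE. Qed.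

Lemma row_of_vec_lincomb a u v :
  row_of_vec (lincomb a u v) = row_comb a (row_of_vec u) (row_of_vec v).
Proof. by congr (_, _); apply/ffunP=> i; rewrite !ffunE. Qed.

Definition row_code (A : seq Row) : pred V := [pred v | row_of_vec v \in A].

Definition code_rows (C : pred V) : seq Row := enum [pred p | C (vec_of_row p)].

Definition coord_sel a (c : 'I_a -> 'I_k) (b : bool) : pred ('I_k + 'I_m) :=
  [pred d | if d is inl i then i \in codom c else b].

Definition row_matches a (c : 'I_a -> 'I_k) b
    (x : {ffun 'I_a -> F}) (y : {ffun 'I_m -> F}) : pred Row :=
  fun r => [forall i, r.1 (c i) == x i] && (b ==> (r.2 == y)).

Lemma row_code_info_set A a (c : 'I_a -> 'I_k) b :
  (forall x y, count (row_matches c b x y) A = 1%N) -> info_set (row_code A) (coord_sel c b).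
Proof.
move=> countA; split=> [z | v1 v2 Av1 Av2 eq12].
  have /hasP [p Ap /andP [/forallP matchx matchy]] :
      has (row_matches c b [ffun i => z (inl (c i))] [ffun j => z (inr j)]) A.
    by rewrite has_count countA.
  exists (vec_of_row p); first by rewrite /row_code /= vec_of_rowK.
  case=> [_ /codomP [i ->] | j]; rewrite ffunE /=.
    by rewrite (eqP (matchx i)) ffunE.
  by rewrite inE => bj; move: matchy; rewrite bj => /eqP ->; rewrite ffunE.
rewrite -[v1]row_of_vecK -[v2]row_of_vecK; congr vec_of_row.
apply: (count1_eq (countA [ffun i => v1 (inl (c i))] [ffun j => v1 (inr j)])) => //.
  apply/andP; split; first by apply/forallP=> i; rewrite !ffunE.
  by apply/implyP=> _; apply/eqP/ffunP=> j; rewrite !ffunE.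
apply/andP; split; first by apply/forallP=> i; rewrite !ffunE eq12 // inE codom_f.
by apply/implyP=> bb; apply/eqP/ffunP=> j; rewrite !ffunE eq12.
Qed.

Lemma code_rows_count1 C a (c : 'I_a -> 'I_k) b : injective c ->
  info_set C (coord_sel c b) -> forall x y, count (row_matches c b x y) (code_rows C) = 1%N.
Proof.
move=> injc [exC uniqC] x y.
pose z : V := [ffun d => match d with
  | inl i => if [pick i0 | c i0 == i] is Some i0 then x i0 else 0
  | inr j => y j end].
have zc i : z (inl (c i)) = x i.
  by rewrite ffunE; case: pickP => [i0 /eqP /injc -> // | /(_ i)]; rewrite eqxx.
have [w Cw eqwz] := exC z.
rewrite /code_rows (@eq_in_count _ _ (pred1 (row_of_vec w))).
  by rewrite count_uniq_mem ?enum_uniq // mem_enum inE row_of_vecK Cw.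
move=> p; rewrite mem_enum inE => Cp /=.
apply/idP/eqP => [/andP [/forallP matchx matchy] | ->].
  rewrite -[p]vec_of_rowK; congr row_of_vec; apply: uniqC => //.
  case=> [_ /codomP [i ->] | j bj]; rewrite eqwz ?inE /= ?codom_f // ffunE /=.
    by rewrite (eqP (matchx i)) -zc.
  by move: matchy; rewrite inE in bj; rewrite bj => /eqP ->; rewrite ffunE.
apply/andP; split; first by apply/forallP=> i; rewrite ffunE eqwz ?inE /= ?codom_f // zc.
by apply/implyP=> bb; apply/eqP/ffunP=> j; rewrite !ffunE eqwz // ffunE.
Qed.

Lemma coord_sel_compl a a' (c : 'I_a' -> 'I_k) b : injective c -> (a + a' = k)%N ->
  exists2 c' : 'I_a -> 'I_k, injective c' & predC (coord_sel c' b) =1 coord_sel c (~~ b).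
Proof.
move=> injc sum_k; pose S := [set i | i \notin codom c].
have cardS : #|S| = a.
  have := cardC (mem (codom c)); rewrite card_codom // !card_ord => card_k.
  have -> : #|S| = #|[predC codom c]| by apply: eq_card => i; rewrite !inE.
  by apply/eqP; rewrite -(eqn_add2l a') card_k -sum_k addnC.
suff [c' injc' codom_c'] : exists2 c' : 'I_a -> 'I_k, injective c' & codom c' =i S.
  by exists c' => // [[i|j]]; rewrite /coord_sel /= ?codom_c' ?inE ?negbK.
subst a; exists enum_val; first exact: enum_val_inj.
move=> i; apply/codomP/idP => [[i0 ->] | Si]; first exact: enum_valP.
by exists (enum_rank_in Si i); rewrite enum_rankK_in.
Qed.

Lemma size_row_matches a (c : 'I_a -> 'I_k) y (rows : seq Row) :
  (forall x, count (row_matches c false x y) rows = 1%N) -> size rows = (#|F| ^ a)%N.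
Proof.
move=> count1.
have -> : size rows = (\sum_x count (row_matches c false x y) rows)%N.
  elim: rows {count1} => [|r rows IH] /=; first by rewrite big1.
  rewrite big_split /= -IH (bigD1 [ffun i => r.1 (c i)]) //= big1 => [|x nx].
    rewrite /row_matches /= andbT; suff -> : [forall i, r.1 (c i) == [ffun i => r.1 (c i)] i].
      by rewrite addn0.
    by apply/forallP=> i; rewrite ffunE.
  apply/eqP; rewrite eqb0 /row_matches andbT; apply: contra nx => /forallP rx.
  by apply/eqP/ffunP=> i; rewrite ffunE (eqP (rx i)).
by rewrite (eq_bigr (fun=> 1%N)) // sum1_card card_ffun !card_ord.
Qed.

Lemma dual_info_set_coord_sel (C : pred V) a a' b : subspace C -> (a + a' = k)%N ->
  (forall c : 'I_a -> 'I_k, injective c -> info_set C (coord_sel c b)) ->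
  forall c : 'I_a' -> 'I_k, injective c -> info_set (dual_code C) (coord_sel c (~~ b)).
Proof.
move=> subC sum_k infoC c injc; have [c' injc' compl] := coord_sel_compl b injc sum_k.
exact: eq_info_set compl (dual_info_set subC (infoC c' injc')).
Qed.

End RowCode.

Lemma linear_AOA_row_code (F : finFieldType) s t k A : @is_linear_AOA F s t k A ->
  [/\ subspace (row_code A),
      forall c : 'I_t -> 'I_k, injective c -> info_set (row_code A) (coord_sel c false) &
      forall c : 'I_s -> 'I_k, injective c -> info_set (row_code A) (coord_sel c true)].
Proof.
case=> [[_ _ [_ _ _ countOA] _ countAOA] A0 Alin]; split.
- split=> [|a u v Au Av]; last by rewrite /row_code /= row_of_vec_lincomb; apply: Alin.
  rewrite /row_code /=; congr (_ \in A): A0.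
  by congr (_, _); apply/ffunP=> i; rewrite !ffunE.
- move=> c injc; apply: row_code_info_set => x y.
  rewrite -(countOA c injc x) count_map; apply: eq_count => r.
  by rewrite /row_matches /= andbT.
- by move=> c injc; apply: row_code_info_set => x y; apply: countAOA.
Qed.

(* m is kept variable so that the dual code, which lives on 'I_(t - s),
   needs no cast to the index type 'I_((k - s) - (k - t)) of the target. *)
Lemma linear_AOA_of_code (F : finFieldType) s t k m (C : pred {ffun 'I_k + 'I_m -> F}) :
  m = (t - s)%N -> (1 <= s)%N -> (s <= t)%N -> (t <= k)%N -> subspace C ->
  (forall c : 'I_t -> 'I_k, injective c -> info_set C (coord_sel c false)) ->
  (forall c : 'I_s -> 'I_k, injective c -> info_set C (coord_sel c true)) ->
  exists B, @is_linear_AOA F s t k B.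
Proof.
move=> eq_m s_gt0 le_st le_tk [C0 Clin] infoOA infoAOA; subst m.
have countOA (c : 'I_t -> 'I_k) : injective c -> forall x : {ffun 'I_t -> F},
    count (fun r : {ffun 'I_k -> F} => [forall i, r (c i) == x i])
          (map fst (code_rows C)) = 1%N.
  move=> injc x; rewrite count_map -(code_rows_count1 injc (infoOA c injc) x 0).
  by apply: eq_count => r; rewrite /row_matches /= andbT.
have injw : injective (widen_ord le_tk) by move=> i j /(congr1 val) /= /val_inj.
exists (code_rows C); split; first split => //.
- split=> //; first exact: leq_trans le_st.
  rewrite size_map (size_row_matches (c := widen_ord le_tk) (y := 0)) // => x.
  rewrite -(countOA _ injw x) count_map; apply: eq_count => r.
  by rewrite /row_matches /= andbT.
- by rewrite card_ffun !card_ord.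
- move=> c injc x y; rewrite -(code_rows_count1 injc (infoAOA c injc) x y).
  exact: eq_count.
- rewrite mem_enum inE; congr C: C0.
  by apply/ffunP; case=> i; rewrite !ffunE.
- move=> a u v; rewrite !mem_enum !inE vec_of_row_comb; exact: Clin.
Qed.

Local Close Scope ring_scope.

Theorem theorem3p5 (F : finFieldType) (s t k : nat) :
  (1 <= s)%N -> (s < t)%N -> (t < k)%N ->
  (exists A, @is_linear_AOA F s t k A) ->
  exists B, @is_linear_AOA F (k - t) (k - s) k B.
Proof.
move=> s_gt0 lt_st lt_tk [A /linear_AOA_row_code [subC infoOA infoAOA]].
apply: (linear_AOA_of_code (C := dual_code (row_code A))); try lia.
- exact: dual_subspace.
- by apply: dual_info_set_coord_sel subC _ infoAOA; lia.
- by apply: dual_info_set_coord_sel subC _ infoOA; lia.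
Qed.
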